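(* Let $X$ be a scattered topological space such that $\mathrm{Homeo}(X)$ is fully transitive, and assume each similarity class of $X$ is infinite. Then every closed normal subgroup of $\mathrm{Homeo}(X)$ is of the form $\mathrm{Fix}(A)$, where $A$ is a union of similarity classes (possibly empty).
   Context: A topological space (not assumed Hausdorff) is scattered if every nonempty subset has a point isolated in that subset. For scattered $X$, $\mathrm{Homeo}(X)$ carries the topology of pointwise convergence on $X$. Two points $x,y\in X$ are similar if there are neighbourhoods $U_x\ni x$, $U_y\ni y$ and a homeomorphism $h\colon U_x\to U_y$ with $h(x)=y$; the equivalence classes are similarity classes. $\mathrm{Homeo}(X)$ is fully transitive if for every $k$ and all $k$-tuples of pairwise distinct points $(x_1,\dots,x_k)$, $(y_1,\dots,y_k)$ with $x_i$ similar to $y_i$, some homeomorphism $g$ satisfies $g(x_i)=y_i$ for all $i$. For $A\subseteq X$, $\mathrm{Fix}(A)$ is the subgroup of homeomorphisms fixing every point of $A$ ($\mathrm{Fix}(\emptyset)=\mathrm{Homeo}(X)$). *)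

From HB Require Import structures.
From mathcomp Require Import all_boot all_order.
From mathcomp Require Import all_classical all_reals topology.
Set Implicit Arguments. Unset Strict Implicit. Unset Printing Implicit Defensive.
Local Open Scope classical_set_scope.

Section Defs.
Context {T : topologicalType}.

Definition scattered : Prop :=
  forall A : set T, A !=set0 ->
    exists2 x, A x & exists2 U : set T, open U & U `&` A = [set x].

Definition homeo (f : T -> T) : Prop :=
  exists g : T -> T, [/\ cancel f g, cancel g f, continuous f & continuous g].

Definition homeo_between (Ux Uy : set T) (h : T -> T) : Prop :=
  exists g : T -> T,
    [/\ h @` Ux `<=` Uy, g @` Uy `<=` Ux,
        {in Ux, cancel h g}, {in Uy, cancel g h} &
        {within Ux, continuous h} /\ {within Uy, continuous g}].

Definition similar (x y : T) : Prop :=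
  exists (Ux Uy : set T) (h : T -> T),
    [/\ nbhs x Ux, nbhs y Uy, homeo_between Ux Uy h & h x = y].

Definition fully_transitive : Prop :=
  forall (k : nat) (x y : 'I_k -> T), injective x -> injective y ->
    (forall i, similar (x i) (y i)) ->
    exists2 g, homeo g & forall i, g (x i) = y i.

Definition union_of_similarity_classes (A : set T) : Prop :=
  forall x y, A x -> similar x y -> A y.

Definition Fix (A : set T) : set (T -> T) :=
  [set g | homeo g /\ forall a, A a -> g a = a].

Definition subgroup_Homeo (N : set (T -> T)) : Prop :=
  [/\ N `<=` homeo, N id,
      (forall f g, N f -> N g -> N (f \o g)) &
      (forall f g, N f -> cancel f g -> cancel g f -> N g)].

Definition normal_Homeo (N : set (T -> T)) : Prop :=
  forall f g g', N f -> homeo g -> cancel g g' -> cancel g' g ->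
    N (g \o f \o g').

(* f lies in the closure of N for the topology of pointwise convergence on X:
   every basic neighbourhood {h | h (x_i) \in U_i, i < n} of f meets N *)
Definition pointwise_closure (N : set (T -> T)) (f : T -> T) : Prop :=
  forall (n : nat) (x : 'I_n -> T) (U : 'I_n -> set T),
    (forall i, open (U i) /\ U i (f (x i))) ->
    exists2 h, N h & forall i, U i (h (x i)).

Definition closed_in_Homeo (N : set (T -> T)) : Prop :=
  forall f, homeo f -> pointwise_closure N f -> N f.

End Defs.

From mathcomp Require Import all_boot all_order.
From mathcomp Require Import all_classical all_reals topology.
Set Implicit Arguments. Unset Strict Implicit. Unset Printing Implicit Defensive.
Local Open Scope classical_set_scope.

(* Take for A the set of points fixed by every element of N.  Then N is
   contained in Fix(A), and A is a union of similarity classes because N is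
   normal and homeomorphisms act transitively on similarity classes.
   Conversely, N being closed, it suffices to match any h in Fix(A) by an
   element of N on every finite set of points.  For p outside A, infinite
   similarity classes let an element of N push p off any finite set, and a
   commutator of such an element with a homeomorphism fixing a finite set F
   gives an element of N fixing F and moving p.  Conjugating by
   homeomorphisms, the elements of N fixing F act transitively on the
   similarity class of p minus F, and the interpolation follows by induction
   on the finite set. *)

Section Homeomorphisms.
Variable T : topologicalType.
Implicit Types (f g : T -> T) (a x : T) (s : seq T).

Lemma homeo_id : homeo (@id T).
Proof. by exists id; split => // x. Qed.

Lemma homeo_inverse f :
  homeo f -> exists g, [/\ homeo g, cancel f g & cancel g f].
Proof. by move=> [g [fg gf cf cg]]; exists g; split => //; exists f. Qed.

Lemma homeo_comp f g : homeo f -> homeo g -> homeo (f \o g).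
Proof.
move=> [f' [ff' f'f cf cf']] [g' [gg' g'g cg cg']].
exists (g' \o f'); split; [exact: can_comp | exact: can_comp | |].
- by move=> x; apply: continuous_comp; [exact: cg | exact: cf].
- by move=> x; apply: continuous_comp; [exact: cf' | exact: cg'].
Qed.

Lemma homeo_similar f a : homeo f -> similar a (f a).
Proof.
move=> [g [fg gf cf cg]]; exists setT, setT, f; split => //; try exact: filterT.
exists g; split; try by move=> ? _.
by split; apply: continuous_subspaceT.
Qed.

Lemma exists_similar_notin x s :
  infinite_set [set y | similar x y] -> exists2 y, similar x y & y \notin s.
Proof.
move=> infx; apply: contrapT => nos; apply: infx.
apply: sub_finite_set (finite_seq s) => y xy /=.
by apply: contrapT => ys; apply: nos; exists y => //; apply/negP.
Qed.

End Homeomorphisms.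

Section FullTransitivity.
Variable T : topologicalType.
Hypothesis ftT : fully_transitive (T := T).
Implicit Types (a b c : T) (s : seq T).

Lemma homeo_move_fixing s a b :
  uniq s -> a \notin s -> b \notin s -> similar a b ->
  exists2 g, homeo g & (forall z, z \in s -> g z = z) /\ g a = b.
Proof.
move=> us aNs bNs ab.
have nth_inj c :
    c \notin s -> injective (fun i : 'I_(size s).+1 => nth c (rcons s c) i).
  move=> cNs i j /eqP; rewrite nth_uniq ?size_rcons ?rcons_uniq ?cNs //.
  by move/eqP/val_inj.
have [i|g hg gxy] := ftT (nth_inj a aNs) (nth_inj b bNs).
  rewrite !nth_rcons; case: ifP => [is_|isN].
    by rewrite (set_nth_default a b is_); apply: homeo_similar (homeo_id T).
  by rewrite !if_same.
exists g => //; split; last first.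
  by have := gxy ord_max; rewrite /= !nth_rcons ltnn eqxx.
move=> z zs; have iz : index z s < (size s).+1 by rewrite ltnS ltnW ?index_mem.
have := gxy (Ordinal iz); rewrite /= !nth_rcons index_mem zs.
by rewrite (set_nth_default b a) ?index_mem // nth_index.
Qed.

Lemma similar_homeo a b : similar a b -> exists2 g, homeo g & g a = b.
Proof.
move=> ab.
have [g hg [_ gab]] := homeo_move_fixing (s := [::]) erefl erefl erefl ab.
by exists g.
Qed.

Lemma similar_sym a b : similar a b -> similar b a.
Proof.
move=> /similar_homeo [g /homeo_inverse [g' [hg' gg' _]] <-].
by rewrite -{2}(gg' a); apply: homeo_similar.
Qed.

Lemma similar_trans a b c : similar a b -> similar b c -> similar a c.
Proof.
move=> /similar_homeo [g hg <-] /similar_homeo [g2 hg2 <-].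
exact: homeo_similar (homeo_comp hg2 hg).
Qed.

End FullTransitivity.

Section NormalSubgroup.
Variables (T : topologicalType) (N : set (T -> T)).
Hypothesis subN : subgroup_Homeo N.
Hypothesis normN : normal_Homeo N.
Implicit Types (f g h : T -> T) (p q y : T) (s : seq T).

Definition fixed_points : set T := [set x | forall f, N f -> f x = x].

Lemma N_homeo f : N f -> homeo f.
Proof. by case: subN => NH _ _ _; apply: NH. Qed.

Lemma N_comp f g : N f -> N g -> N (f \o g).
Proof. by case: subN => _ _ Ncomp _; apply: Ncomp. Qed.

Lemma N_inverse f : N f -> exists g, [/\ N g, cancel f g & cancel g f].
Proof.
case: subN => NH _ _ Ninv Nf; have [g [_ fg gf]] := homeo_inverse (NH _ Nf).
by exists g; split => //; apply: Ninv fg gf.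
Qed.

Lemma fixed_points_of_image f p : N f -> fixed_points (f p) -> fixed_points p.
Proof.
move=> Nf fixfp; have [f' [Nf' ff' _]] := N_inverse Nf.
have fp : f p = p by rewrite -{2}(ff' p) fixfp.
by rewrite -fp.
Qed.

Lemma fixed_points_similar :
  fully_transitive (T := T) -> union_of_similarity_classes fixed_points.
Proof.
move=> ftT x y fixx /(similar_homeo ftT) [g hg <-] f Nf.
have [g' [hg' gg' g'g]] := homeo_inverse hg.
by apply: (can_inj g'g); rewrite gg'; apply: fixx (normN Nf hg' g'g gg').
Qed.

Section InfiniteClasses.
Hypothesis ftT : fully_transitive (T := T).
Hypothesis infT : forall x : T, infinite_set [set y | similar x y].

Lemma N_move_off p s : ~ fixed_points p -> exists2 u, N u & u p \notin s.
Proof.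
move=> /existsNP [e /not_implyP [Ne ep]].
have [e' [Ne' _ e'e]] := N_inverse Ne.
have e'p : e' p != p by apply: contra_notN ep => /eqP e'p; rewrite -{1}e'p e'e.
have [v2 e'p_v2 v2N] := exists_similar_notin (p :: s) (@infT (e' p)).
have e'pNp : e' p \notin [:: p] by rewrite inE.
have v2Np : v2 \notin [:: p] by apply: contra v2N; rewrite !inE => ->.
have [k hk [kp kv]] :=
  homeo_move_fixing ftT (s := [:: p]) erefl e'pNp v2Np e'p_v2.
have [k' [_ kk' k'k]] := homeo_inverse hk.
have k'p : k' p = p by rewrite -{1}(kp p (mem_head _ _)) kk'.
exists (k \o e' \o k'); first exact: normN Ne' hk kk' k'k.
by rewrite /= k'p kv; apply: contra v2N; rewrite inE orbC => ->.
Qed.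

(* g fixes p, s and u(s) but moves u p, so the commutator g^-1 u^-1 g u
   fixes s and sends p to g^-1 (u^-1 (g (u p))) != p. *)
Lemma N_move_fixing p s : ~ fixed_points p -> p \notin s ->
  exists e, [/\ N e, forall z, z \in s -> e z = z & e p != p].
Proof.
move=> fixNp pNs; have [u Nu uNps] := N_move_off (p :: s) fixNp.
have [u' [Nu' uu' u'u]] := N_inverse Nu.
move: uNps; rewrite inE negb_or => /andP[up_p upNs].
pose S := undup (p :: s ++ map u s).
have upNS : u p \notin S.
  rewrite mem_undup inE negb_or up_p mem_cat negb_or upNs.
  by rewrite (mem_map (can_inj uu')).
have [w upw] := exists_similar_notin (u p :: S) (@infT (u p)).
rewrite inE negb_or => /andP[w_up wNS].
have [g hg [gS gup]] := homeo_move_fixing ftT (undup_uniq _) upNS wNS upw.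
have [g' [hg' gg' g'g]] := homeo_inverse hg.
have g'S z : z \in S -> g' z = z by move=> /gS {1}<-; rewrite gg'.
exists ((g' \o u' \o g) \o u); split.
- exact: N_comp (normN Nu' hg' g'g gg') Nu.
- move=> z zs /=.
  by rewrite gS ?uu' ?g'S // mem_undup inE mem_cat ?zs ?map_f ?orbT.
- rewrite /= gup; apply: contra w_up => /eqP g'u'w.
  have u'w : u' w = p by rewrite -[u' w]g'g g'u'w gS // mem_undup mem_head.
  by rewrite -u'w u'u.
Qed.

Lemma N_transitive_fixing y q s : ~ fixed_points y -> similar y q -> y != q ->
  y \notin s -> q \notin s ->
  exists e, [/\ N e, forall z, z \in s -> e z = z & e y = q].
Proof.
move=> fixNy yq y_q yNs qNs; have [e [Ne es ey_y]] := N_move_fixing fixNy yNs.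
have [e' [_ ee' _]] := N_inverse Ne.
pose S := undup (y :: s).
have eyNS : e y \notin S.
  rewrite mem_undup inE negb_or ey_y /=; apply: contra ey_y => eys.
  by apply/eqP/(can_inj ee'); rewrite es.
have qNS : q \notin S by rewrite mem_undup inE negb_or eq_sym y_q.
have eyq : similar (e y) q :=
  similar_trans ftT (similar_sym ftT (homeo_similar y (N_homeo Ne))) yq.
have [g hg [gS gey]] := homeo_move_fixing ftT (undup_uniq _) eyNS qNS eyq.
have [g' [_ gg' g'g]] := homeo_inverse hg.
have g'S z : z \in S -> g' z = z by move=> /gS {1}<-; rewrite gg'.
exists (g \o e \o g'); split; first exact: normN Ne hg gg' g'g.
- by move=> z zs /=; rewrite g'S ?es ?gS // mem_undup inE zs orbT.
- by rewrite /= g'S ?mem_undup ?mem_head.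
Qed.

Lemma N_interpolate h s : Fix fixed_points h ->
  exists2 f, N f & forall z, z \in s -> f z = h z.
Proof.
move=> [hh hfix]; elim: s => [|p s [f Nf fh]].
  by exists id => //; case: subN.
wlog fpNhp : / f p != h p.
  move=> wlog_fp; have [fp|] := eqVneq (f p) (h p); last exact: wlog_fp.
  by exists f => // z /predU1P [->|]; last exact: fh.
have pNs : p \notin s by apply: contra fpNhp => ps; rewrite fh.
have fixNfp : ~ fixed_points (f p).
  move=> /(fixed_points_of_image Nf) fixp.
  by rewrite hfix // (fixp f Nf) eqxx in fpNhp.
have fph : similar (f p) (h p) :=
  similar_trans ftT (similar_sym ftT (homeo_similar p (N_homeo Nf)))
    (homeo_similar p hh).
have [h' [_ hh' _]] := homeo_inverse hh.
have [f' [_ ff' _]] := N_inverse Nf.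
have fpNhs : f p \notin map h s.
  apply/mapP => -[z zs /esym]; rewrite -fh // => /(can_inj ff') zp.
  by rewrite -zp zs in pNs.
have hpNhs : h p \notin map h s by rewrite (mem_map (can_inj hh')).
have [e [Ne es efp]] := N_transitive_fixing fixNfp fph fpNhp fpNhs hpNhs.
exists (e \o f); first exact: N_comp.
by move=> z /predU1P [->|zs] //=; rewrite fh ?es ?map_f.
Qed.

Lemma Fix_fixed_points_closure : Fix fixed_points `<=` pointwise_closure N.
Proof.
move=> h Fh n x U xU; have [f Nf fh] := N_interpolate (codom x) Fh.
by exists f => // i; rewrite fh ?codom_f //; case: (xU i).
Qed.

End InfiniteClasses.
End NormalSubgroup.

Theorem proposition18 (T : topologicalType) :
  scattered (T := T) -> fully_transitive (T := T) ->
  (forall x : T, infinite_set [set y | similar x y]) ->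
  forall N : set (T -> T),
    subgroup_Homeo N -> normal_Homeo N -> closed_in_Homeo N ->
    exists A : set T, union_of_similarity_classes A /\ N = Fix A.
Proof.
move=> _ ftT infT N subN normN closedN; exists (fixed_points N).
split; first exact: fixed_points_similar.
apply/seteqP; split=> [f Nf | h Fh].
  by split=> [|a fixa]; [exact (N_homeo subN Nf) | exact: fixa].
by apply: closedN; [case: Fh | exact: Fix_fixed_points_closure].
Qed.
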